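(* Let $\mathcal{O}$, $n$, $\alpha,\beta$ and $\rho=\rho^1\cdots\rho^k$ with index sets $\mathcal{L},\mathcal{N}$ be as in the standing setup. Then $$\sum_{i\in\mathcal{L}}\mathrm{len}(\rho^i)+\sum_{i\in\mathcal{N}}\bigl(\mathrm{len}(\rho^i_{\mathrm{pref}})+\mathrm{len}(\rho^i_{\mathrm{suff}})\bigr)\le 5n^2.$$
   Context: $\mathbb{N}=\{0,1,2,\dots\}$. A one-counter system (OCS) $\mathcal{O}$ consists of a finite set $Q$ of states, a set $T_{>0}\subseteq Q\times\{-1,0,1\}\times Q$ of non-zero transitions and a set $T_{=0}\subseteq Q\times\{0,1\}\times Q$ of zero tests. A configuration is a pair $(q,c)\in Q\times\mathbb{N}$ (state $q$, counter value $c$). A transition $t=(p,d,q)$ has source $p$, target $q$, effect $d$; it can be fired in $(p,c)$ if either $t\in T_{>0}$ and $c>0$, or $t\in T_{=0}$ and $c=0$, yielding $(q,c+d)$. A path is a sequence $(\gamma_1,t_1)\cdots(\gamma_m,t_m)$ such that, with some $\gamma_{m+1}$, firing $t_i$ in $\gamma_i$ yields $\gamma_{i+1}$ for all $i\le m$; its source is $\gamma_1$, target $\gamma_{m+1}$, length $\mathrm{len}=m$, configurations appearing on it are $\gamma_1,\dots,\gamma_{m+1}$, intermediate ones are $\gamma_2,\dots,\gamma_m$; its projection is $\mathrm{proj}=t_1\cdots t_m$ and its effect $\mathrm{eff}$ is the sum of the effects of its transitions. A sequence of transitions is consistent if each transition's target is the next one's source. A cycle is a consistent sequence of non-zero transitions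 starting and ending in the same state (its base state); positive/negative if its effect is positive/negative; simple if no state is visited twice except the base at start and end. The transition multigraph $G$ has vertices $Q$ and an edge $p\to q$ labelled $d$ for each $(p,d,q)\in T_{>0}$; $\mathfrak{S}$ is the set of its SCCs and $n_S$ the number of states in $S\in\mathfrak{S}$. A cycle is contained in $S$ if all its states lie in $S$; $S$ is positively (negatively) enabled if it contains a positive (negative) cycle. For every positively enabled $S$ a simple positive cycle $\sigma^+_S$ contained in $S$ is fixed, and for every negatively enabled $T$ a simple negative cycle $\sigma^-_T$ contained in $T$. An arc is a path whose source and target have counter value $0$ and whose intermediate configurations have positive counter value. A path is low if all configurations appearing on it have counter value $<5n$, where $n=|Q|$. For $S,T\in\mathfrak{S}$, an arc $\rho$ is $(S,T)$-normal if $\rho=\rho_{\mathrm{pref}}\rho_{\mathrm{up}}\rho_{\mathrm{cap}}\rho_{\mathrm{down}}\rho_{\mathrm{suff}}$ (normal decomposition) with $\rho_{\mathrm{pref}},\rho_{\mathrm{suff}}$ low, $\mathrm{proj}(\rho_{\mathrm{up}})=(\sigma^+_S)^a$, $\mathrm{proj}(\rho_{\mathrm{down}})=(\sigma^-_T)^b$ for some $a,b\in\mathbb{N}$, the source of $\rho_{\mathrm{cap}}$ having the base state of $\sigma^+_S$ and its target the base state of $\sigma^-_T$. Writing $A=\mathrm{eff}(\sigma^+_S)$, $B=-\mathrm{eff}(\sigma^-_T)$, such a decomposition is good if: (iii) $aA\le 2\,\mathrm{len}(\rho_{\mathrm{cap}})+2\,\mathrm{lcm}(A,B)$; (iv) $bB\le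 2\,\mathrm{len}(\rho_{\mathrm{cap}})+2\,\mathrm{lcm}(A,B)$; (v) no infix of $\mathrm{proj}(\rho_{\mathrm{cap}})$ is a cycle with effect divisible by $\gcd(A,B)$; (vi) the target of $\rho_{\mathrm{up}}$ and the source of $\rho_{\mathrm{down}}$ have counter values $>n$; (vii) all configurations appearing on $\rho_{\mathrm{pref}}$ and $\rho_{\mathrm{suff}}$ together are pairwise distinct. Standing setup: $\alpha,\beta$ are configurations with counter value $0$; $\rho=\rho^1\rho^2\cdots\rho^k$ is a path from $\alpha$ to $\beta$ that has the minimum possible number of appearing configurations with counter value $0$ among all paths from $\alpha$ to $\beta$; each $\rho^i$ is an arc; $\{1,\dots,k\}=\mathcal{L}\sqcup\mathcal{N}$ where for $i\in\mathcal{L}$, $\rho^i$ is a low arc of minimum length among all low arcs with the same source and target, and for $i\in\mathcal{N}$, $\rho^i$ is $(S_i,T_i)$-normal for some $S_i,T_i\in\mathfrak{S}$ with a fixed good normal decomposition $\rho^i=\rho^i_{\mathrm{pref}}\rho^i_{\mathrm{up}}\rho^i_{\mathrm{cap}}\rho^i_{\mathrm{down}}\rho^i_{\mathrm{suff}}$. For $S,T\in\mathfrak{S}$: $\mathcal{N}_{(S,T)}=\{i\in\mathcal{N}: (S_i,T_i)=(S,T)\}$, $\mathcal{N}_{(S,\cdot)}=\{i\in\mathcal{N}:S_i=S\}$, $\mathcal{N}_{(\cdot,T)}=\{i\in\mathcal{N}:T_i=T\}$. *)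

From mathcomp Require Import all_boot all_order all_algebra.
Set Implicit Arguments. Unset Strict Implicit. Unset Printing Implicit Defensive.
Import GRing.Theory Num.Theory.

Definition trans (Q : finType) := (Q * int * Q)%type.
(* configurations (state, counter value) *)
Definition config (Q : finType) := (Q * nat)%type.

Record OCS (Q : finType) := MkOCS {
  Tpos : pred (trans Q);
  Tzero : pred (trans Q);
  Tpos_eff : forall t, Tpos t -> t.1.2 \in [:: (-1)%R; 0%R; 1%R];
  Tzero_eff : forall t, Tzero t -> t.1.2 \in [:: 0%R; 1%R]
}.

Section OCSDefs.
Variables (Q : finType) (O : OCS Q).

Definition tsrc (t : trans Q) : Q := t.1.1.
Definition teff (t : trans Q) : int := t.1.2.
Definition ttgt (t : trans Q) : Q := t.2.

Definition can_fire (c : config Q) (t : trans Q) : bool :=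
  (tsrc t == c.1) && ((Tpos O t && (0 < c.2)%N) || (Tzero O t && (c.2 == 0)%N)).

(* the configuration obtained by firing t in c (meaningful when can_fire c t) *)
Definition step (c : config Q) (t : trans Q) : config Q :=
  (ttgt t, `|(c.2%:Z + teff t)%R|%N).

(* A opath is given by its source configuration and its projection;
   the configurations appearing on it are determined by these. *)
Record opath := OPath { psrc : config Q; ptrs : seq (trans Q) }.

Fixpoint valid_from (c : config Q) (ts : seq (trans Q)) : bool :=
  if ts is t :: ts' then can_fire c t && valid_from (step c t) ts' else true.

Fixpoint cfgs_from (c : config Q) (ts : seq (trans Q)) : seq (config Q) :=
  c :: (if ts is t :: ts' then cfgs_from (step c t) ts' else [::]).

Definition valid (p : opath) : bool := valid_from (psrc p) (ptrs p).
(* configurations appearing on p: gamma_1, ..., gamma_{m+1} *)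
Definition cfgs (p : opath) : seq (config Q) := cfgs_from (psrc p) (ptrs p).
Definition ptgt (p : opath) : config Q := foldl step (psrc p) (ptrs p).
Definition len (p : opath) : nat := size (ptrs p).
(* intermediate configurations gamma_2, ..., gamma_m *)
Definition intermediate (p : opath) : seq (config Q) :=
  take (len p).-1 (behead (cfgs p)).

Definition eff (s : seq (trans Q)) : int := (\sum_(t <- s) teff t)%R.

Definition path_from_to (p : opath) (a b : config Q) : Prop :=
  valid p /\ psrc p = a /\ ptgt p = b.

Definition zcount (p : opath) : nat := count (fun c : config Q => c.2 == 0%N) (cfgs p).

Definition is_arc (p : opath) : bool :=
  [&& valid p, (psrc p).2 == 0%N, (ptgt p).2 == 0%N &
      all (fun c : config Q => (0 < c.2)%N) (intermediate p)].

Definition n_states : nat := #|Q|.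

Definition low (p : opath) : bool :=
  all (fun c : config Q => (c.2 < 5 * n_states)%N) (cfgs p).

Definition consistent (s : seq (trans Q)) : bool :=
  sorted (fun t u : trans Q => ttgt t == tsrc u) s.

Definition is_cycle (s : seq (trans Q)) : bool :=
  if s is t :: s' then
    [&& all (Tpos O) s, consistent s & ttgt (last t s') == tsrc t]
  else false.

Definition base (s : seq (trans Q)) : option Q :=
  if s is t :: _ then Some (tsrc t) else None.

Definition simple (s : seq (trans Q)) : bool := uniq (map tsrc s).

Definition contained (S : {set Q}) (s : seq (trans Q)) : bool :=
  all (fun t => (tsrc t \in S) && (ttgt t \in S)) s.

Definition edge : rel Q :=
  fun p q => has (fun d : int => Tpos O (p, d, q)) [:: (-1)%R; 0%R; 1%R].

Definition is_scc (S : {set Q}) : Prop :=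
  exists p : Q, S = [set q | connect edge p q && connect edge q p].

Definition pos_enabled (S : {set Q}) : Prop :=
  exists s, [&& is_cycle s, contained S s & (0 < eff s)%R].
Definition neg_enabled (S : {set Q}) : Prop :=
  exists s, [&& is_cycle s, contained S s & (eff s < 0)%R].

(* a normal decomposition rho = pref up cap down suff, with exponents a, b *)
Record ndec := NDec {
  dpref : opath; dup : opath; dcap : opath; ddown : opath; dsuff : opath;
  da : nat; db : nat }.

Section Normal.
Variables (sigp sign : {set Q} -> seq (trans Q)).

Definition normal_dec (S T : {set Q}) (rho : opath) (d : ndec) : Prop :=
  [/\ is_scc S, is_scc T, pos_enabled S & neg_enabled T] /\
  is_arc rho /\
  [/\ valid (dpref d), valid (dup d), valid (dcap d), valid (ddown d) & valid (dsuff d)] /\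
  [/\ psrc (dpref d) = psrc rho, psrc (dup d) = ptgt (dpref d),
      psrc (dcap d) = ptgt (dup d), psrc (ddown d) = ptgt (dcap d)
    & psrc (dsuff d) = ptgt (ddown d)] /\
  ptrs rho = ptrs (dpref d) ++ ptrs (dup d) ++ ptrs (dcap d) ++ ptrs (ddown d)
             ++ ptrs (dsuff d) /\
  low (dpref d) /\ low (dsuff d) /\
  ptrs (dup d) = flatten (nseq (da d) (sigp S)) /\
  ptrs (ddown d) = flatten (nseq (db d) (sign T)) /\
  Some (psrc (dcap d)).1 = base (sigp S) /\
  Some (ptgt (dcap d)).1 = base (sign T).

Definition good_normal_dec (S T : {set Q}) (rho : opath) (d : ndec) : Prop :=
  let A := `|eff (sigp S)|%N in
  let B := `|eff (sign T)|%N in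
  normal_dec S T rho d /\
  (da d * A <= 2 * len (dcap d) + 2 * lcmn A B)%N /\
  (db d * B <= 2 * len (dcap d) + 2 * lcmn A B)%N /\
  (forall s, infix s (ptrs (dcap d)) -> is_cycle s ->
                ~~ (gcdn A B %| `|eff s|)%N) /\
  (n_states < (ptgt (dup d)).2)%N /\ (n_states < (psrc (ddown d)).2)%N /\
  (* (vii) *) uniq (cfgs (dpref d) ++ cfgs (dsuff d)).

End Normal.

Fixpoint chain (c : config Q) (ps : seq opath) : Prop :=
  if ps is p :: ps' then psrc p = c /\ chain (ptgt p) ps' else True.

Definition concat_of (rho : opath) (ps : seq opath) : Prop :=
  chain (psrc rho) ps /\ ptrs rho = flatten (map ptrs ps).

Definition min_low_arc (p : opath) : Prop :=
  is_arc p /\ low p /\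
  forall p', is_arc p' -> low p' -> psrc p' = psrc p -> ptgt p' = ptgt p ->
    (len p <= len p')%N.

End OCSDefs.

From mathcomp Require Import all_boot all_order all_algebra.
From mathcomp Require Import zify.
Set Implicit Arguments. Unset Strict Implicit. Unset Printing Implicit Defensive.

(* Every transition of rho is fired from a configuration lying in exactly one
   arc rho^i.  Cutting out a loop of rho removes the zero configurations on
   it, so by minimality no loop of rho passes through counter value 0; as
   every arc starts at counter value 0, a configuration fired from in two
   different arcs would lie on such a loop.  Hence distinct arcs fire from
   disjoint sets of configurations.  Inside one arc, a minimal low arc fires
   from pairwise distinct configurations (a loop could be cut to shorten it),
   and so do the prefix and suffix of a good normal decomposition together,
   by (vii).  The left-hand side therefore counts pairwise distinct
   configurations with counter value below 5n, of which there are n * 5n. *)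

Lemma all2_map (I T U : Type) (r : T -> U -> bool) (f : I -> T) (g : I -> U) s :
  all2 r (map f s) (map g s) = all (fun i => r (f i) (g i)) s.
Proof. by elim: s => //= i s ->. Qed.

Section Repeats.
Variable X : eqType.
Implicit Types (s : seq X) (z : pred X) (bs : seq (seq X)).

Lemma not_uniq_repeat s : ~~ uniq s -> exists s1 x s2 s3, s = s1 ++ x :: s2 ++ x :: s3.
Proof.
elim: s => [|y s IH] //=; rewrite negb_and negbK => /orP[/splitPr[s2 s3] | /IH].
- by exists [::], y, s2, s3.
- by case=> s1 [x [s2 [s3 ->]]]; exists (y :: s1), x, s2, s3.
Qed.

Lemma all_skip_repeat (a : pred X) s1 x s2 s3 :
  all a (s1 ++ x :: s2 ++ x :: s3) -> all a (s1 ++ x :: s3).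
Proof. by rewrite !all_cat /= all_cat /= => /and5P[-> -> _ _ ->]. Qed.

Lemma all_behead_skip_repeat (a : pred X) s1 x s2 s3 :
  all a (behead (s1 ++ x :: s2 ++ x :: s3)) -> all a (behead (s1 ++ x :: s3)).
Proof.
case: s1 => [|y s1] /=; last exact: all_skip_repeat.
by rewrite all_cat /= => /and3P[].
Qed.

Lemma count_skip_repeat_lt z s1 x s2 s3 : has z (x :: s2) ->
  count z (s1 ++ x :: s3) < count z (s1 ++ x :: s2 ++ x :: s3).
Proof. by rewrite has_count !count_cat /= count_cat /=; lia. Qed.

Definition loops_avoid z s :=
  forall s1 x s2 s3, s = s1 ++ x :: s2 ++ x :: s3 -> ~~ has z (x :: s2).

Lemma loops_avoid_catr z s1 s2 : loops_avoid z (s1 ++ s2) -> loops_avoid z s2.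
Proof. by move=> Hl t1 x t2 t3 E; apply: (Hl (s1 ++ t1)); rewrite E catA. Qed.

Lemma take1_flatten z bs :
  all (fun b => all z (take 1 b)) bs -> all z (take 1 (flatten bs)).
Proof. by elim: bs => [|[|y b] bs IH] //= => /andP[/andP[-> _] _]; rewrite take0. Qed.

(* A repetition across two blocks would span the start of the later block. *)
Lemma disjoint_blocks z bs :
  all (fun b => all z (take 1 b)) bs -> loops_avoid z (flatten bs) ->
  pairwise (fun b c => ~~ has [in b] c) bs.
Proof.
elim: bs => [|b bs IH] //= /andP[_ Hbs] Hl.
rewrite (IH Hbs (loops_avoid_catr Hl)) andbT.
apply/allP => c Hc; apply/hasPn => x Hxc; apply/negP => Hxb.
have Hxf : x \in flatten bs by apply/flattenP; exists c.
move: Hl (take1_flatten Hbs); case/splitPr: Hxf => c1 c2; case/splitPr: Hxb => b1 b2 Hl Hz.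
have E : (b1 ++ x :: b2) ++ c1 ++ x :: c2 = b1 ++ x :: (b2 ++ c1) ++ x :: c2.
  by rewrite -catA /= -catA.
have /negP := Hl _ _ _ _ E; apply.
case: c1 {Hl E} Hz => [|y c1] /= => /andP[Hz _].
- by rewrite Hz.
- by rewrite has_cat /= Hz !orbT.
Qed.

Lemma all2_flatten_subset (r : rel (seq X)) Ls bs :
  (forall l b, r l b -> {subset l <= b}) -> all2 r Ls bs ->
  {subset flatten Ls <= flatten bs}.
Proof.
move=> Hr; elim: Ls bs => [|l Ls IH] [|b bs] //= /andP[/Hr Hlb /IH HLs] x.
by rewrite !mem_cat => /orP[/Hlb | /HLs] ->; rewrite ?orbT.
Qed.

Lemma uniq_flatten_subblocks Ls bs :
  all2 (fun l b => uniq l && all [in b] l) Ls bs ->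
  pairwise (fun b c => ~~ has [in b] c) bs -> uniq (flatten Ls).
Proof.
have Hsub (l b : seq X) : uniq l && all [in b] l -> {subset l <= b}.
  by case/andP=> _ /allP.
elim: Ls bs => [|l Ls IH] [|b bs] //= /andP[Hlb HLs] /andP[/allP Hb Hbs].
rewrite cat_uniq (IH bs) // andbT (andP Hlb).1 /=.
apply/hasPn => x /(all2_flatten_subset Hsub HLs) /flattenP[c Hc Hxc].
by apply: contraNN (Hb c Hc) => /(Hsub _ _ Hlb) Hx; apply/hasP; exists x.
Qed.

End Repeats.

Lemma size_uniq_bounded_cfgs (Q : finType) (N : nat) (s : seq (config Q)) :
  uniq s -> all (fun c : config Q => c.2 < N) s -> size s <= #|Q| * N.
Proof.
move=> Hu /allP Hs; rewrite cardE -(size_iota 0 N) -(size_allpairs pair).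
apply: uniq_leq_size Hu _ => c Hc; apply/allpairsP; exists c.
by rewrite mem_enum mem_iota /= Hs //; case: c {Hc}.
Qed.

Section FiredConfigurations.
Variables (Q : finType) (O : OCS Q).
Implicit Types (c : config Q) (ts : seq (trans Q)) (p : opath Q).

Fixpoint fired_from c ts : seq (config Q) :=
  if ts is t :: ts' then c :: fired_from (step c t) ts' else [::].

Definition fired p := fired_from (psrc p) (ptrs p).

Definition low_cfg c : bool := c.2 < 5 * n_states Q.

Lemma size_fired p : size (fired p) = len p.
Proof. by rewrite /fired /len; elim: (ptrs p) (psrc p) => //= t ts IH c; rewrite IH. Qed.

Lemma cfgs_fromE c ts : cfgs_from c ts = rcons (fired_from c ts) (foldl (@step Q) c ts).
Proof. by elim: ts c => //= t ts IH c; rewrite IH. Qed.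

Lemma cfgsE p : cfgs p = rcons (fired p) (ptgt p).
Proof. exact: cfgs_fromE. Qed.

Lemma intermediateE p : intermediate p = behead (fired p).
Proof.
rewrite /intermediate cfgsE -size_fired.
by case: (fired p) => //= c s; rewrite -cats1 take_size_cat.
Qed.

Lemma mem_fired p : {subset fired p <= cfgs p}.
Proof. by rewrite cfgsE; apply: mem_subseq; apply: subseq_rcons. Qed.

Lemma low_fired p : low p -> all low_cfg (fired p).
Proof. by move/allP=> Hlow; apply/allP => c /mem_fired /Hlow. Qed.

Lemma valid_from_cat c s1 s2 :
  valid_from O c (s1 ++ s2) = valid_from O c s1 && valid_from O (foldl (@step Q) c s1) s2.
Proof. by elim: s1 c => //= t s1 IH c; rewrite IH andbA. Qed.

Lemma fired_from_cat c s1 s2 :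
  fired_from c (s1 ++ s2) = fired_from c s1 ++ fired_from (foldl (@step Q) c s1) s2.
Proof. by elim: s1 c => //= t s1 IH c; rewrite IH. Qed.

Lemma fired_from_catP c ts s1 s2 : fired_from c ts = s1 ++ s2 ->
  exists ts1 ts2, [/\ ts = ts1 ++ ts2, fired_from c ts1 = s1
                    & fired_from (foldl (@step Q) c ts1) ts2 = s2].
Proof.
elim: s1 c ts => [|x s1 IH] c ts; first by move=> E; exists [::], ts.
case: ts => [|t ts] //= [-> /IH[ts1 [ts2 [-> E1 E2]]]].
by exists (t :: ts1), ts2; rewrite /= E1.
Qed.

Lemma fired_from_head c ts x s : fired_from c ts = x :: s -> x = c.
Proof. by case: ts => //= t ts []. Qed.

Lemma skip_loop p s1 x s2 s3 : fired p = s1 ++ x :: s2 ++ x :: s3 ->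
  exists p', [/\ psrc p' = psrc p, ptgt p' = ptgt p, valid O p -> valid O p'
               & fired p' = s1 ++ x :: s3].
Proof.
case/fired_from_catP=> ts1 [tr [Ets F1]].
case/(@fired_from_catP _ _ (x :: s2) (x :: s3)) => ts2 [ts3 [Etr /fired_from_head Ex]].
move=> /[dup] F3 /fired_from_head Ey.
exists (OPath (psrc p) (ts1 ++ ts3)); rewrite /valid /ptgt /fired /= Ets Etr.
rewrite -Ey in F3; rewrite !valid_from_cat !foldl_cat fired_from_cat F1 -Ey -Ex F3.
by split=> // /and3P[-> _ ->].
Qed.

Lemma fired_chain c ps : chain c ps ->
  fired_from c (flatten (map (@ptrs Q) ps)) = flatten (map fired ps).
Proof.
by elim: ps c => //= p ps IH c [<- /IH <-]; rewrite fired_from_cat.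
Qed.

Lemma fired_concat rho ps : concat_of rho ps -> fired rho = flatten (map fired ps).
Proof. by case=> Hc Ets; rewrite /fired Ets fired_chain. Qed.

Lemma arc_take1_fired p : is_arc O p -> all (fun c : config Q => c.2 == 0) (take 1 (fired p)).
Proof. by case/and4P=> _ H0 _ _; rewrite /fired; case: (ptrs p) => //= *; rewrite H0 take0. Qed.

(* Removing a loop from a minimal low arc would give a shorter low arc. *)
Lemma min_low_arc_uniq p : min_low_arc O p -> uniq (fired p).
Proof.
case=> /and4P[Hv Hs0 Ht0 Hint] [Hlow Hmin].
apply: contraT => /not_uniq_repeat[s1 [x [s2 [s3 E]]]].
have [p' [Hs Ht Hv' E']] := skip_loop E.
have : len p <= len p'.
  apply: Hmin => //.
    apply/and4P; split; [exact: Hv' Hv | by rewrite Hs | by rewrite Ht |].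
    by rewrite intermediateE E'; rewrite intermediateE E in Hint; apply: all_behead_skip_repeat Hint.
  by move: Hlow; rewrite /low !cfgsE E E' Ht !all_rcons => /andP[-> /all_skip_repeat].
by rewrite -!size_fired E E' !size_cat /= size_cat /=; lia.
Qed.

(* Removing a loop through a zero configuration would drop a zero configuration. *)
Lemma zcount_min_loops_avoid rho a b : path_from_to O rho a b ->
  (forall rho', path_from_to O rho' a b -> zcount rho <= zcount rho') ->
  loops_avoid (fun c : config Q => c.2 == 0) (fired rho).
Proof.
move=> [Hv [Hs Ht]] Hmin s1 x s2 s3 E; apply/negP => Hz.
have [p' [Hs' Ht' Hv' E']] := skip_loop E.
have : zcount rho <= zcount p' by apply: Hmin; split; [exact: Hv' | rewrite Hs' Ht'].
rewrite /zcount !cfgsE -!cats1 !count_cat E E' Ht' leq_add2r leqNgt.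
by rewrite count_skip_repeat_lt.
Qed.

Section NormalArcs.
Variables (sigp sign : {set Q} -> seq (trans Q)).

Lemma good_normal_dec_pref_suff S T rho d :
  good_normal_dec O sigp sign S T rho d ->
  let l := fired (dpref d) ++ fired (dsuff d) in
  [&& uniq l, all [in fired rho] l & all low_cfg l].
Proof.
case=> [[_ [_ [_ [[Epref Eup Ecap Edown Esuff] [Esplit [Hlp [Hls _]]]]]]]] [_ [_ [_ [_ [_ Hun]]]]].
have Efired : fired rho = fired (dpref d) ++ fired (dup d) ++ fired (dcap d)
                         ++ fired (ddown d) ++ fired (dsuff d).
  rewrite (@fired_concat rho [:: dpref d; dup d; dcap d; ddown d; dsuff d]) /= ?cats0 //.
  by split; [do !split | rewrite Esplit /= cats0].
apply/and3P; split.
- by apply: subseq_uniq Hun; apply: cat_subseq; rewrite cfgsE subseq_rcons.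
- by apply/allP => c; rewrite Efired !mem_cat => /orP[] ->; rewrite ?orbT.
- by rewrite all_cat !low_fired.
Qed.

End NormalArcs.
End FiredConfigurations.

Unset Implicit Arguments.

Theorem lemma3 (Q : finType) (O : OCS Q)
  (sigp sign : {set Q} -> seq (trans Q))
  (Hsigp : forall S, is_scc O S -> pos_enabled O S ->
     [&& is_cycle O (sigp S), simple (sigp S), contained S (sigp S)
       & (0 < eff (sigp S))%R])
  (Hsign : forall T, is_scc O T -> neg_enabled O T ->
     [&& is_cycle O (sign T), simple (sign T), contained T (sign T)
       & (eff (sign T) < 0)%R])
  (alpha beta : config Q) (Ha : alpha.2 = 0) (Hb : beta.2 = 0)
  (rho : opath Q) (Hrho : path_from_to O rho alpha beta)
  (Hmin : forall rho' : opath Q, path_from_to O rho' alpha beta ->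
     zcount rho <= zcount rho')
  (rhos : seq (opath Q)) (Hcat : concat_of rho rhos)
  (Harcs : all (is_arc O) rhos)
  (inL : pred nat) (dec : nat -> ndec Q)
  (HL : forall i, i < size rhos -> inL i ->
     min_low_arc O (nth (OPath alpha [::]) rhos i))
  (HN : forall i, i < size rhos -> ~~ inL i ->
     exists S T, good_normal_dec O sigp sign S T (nth (OPath alpha [::]) rhos i) (dec i)) :
  \sum_(i < size rhos | inL i) len (nth (OPath alpha [::]) rhos i)
  + \sum_(i < size rhos | ~~ inL i) (len (dpref (dec i)) + len (dsuff (dec i)))
  <= 5 * (n_states Q) ^ 2.
Proof.
set d := OPath alpha [::]; set m := size rhos.
pose L i := if inL i then fired (nth d rhos i)
            else fired (dpref (dec i)) ++ fired (dsuff (dec i)).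
have HLi i : i < m ->
    [&& uniq (L i), all [in fired (nth d rhos i)] (L i) & all (@low_cfg Q) (L i)].
  move=> Hi; rewrite /L; case: ifP => HiL.
  - have [_ [Hlow _]] := HL i Hi HiL.
    by rewrite (min_low_arc_uniq (HL i Hi HiL)) allss low_fired.
  - by have [S [T /good_normal_dec_pref_suff]] := HN i Hi (negbT HiL).
have Hblocks : pairwise (fun b c => ~~ has [in b] c) (map (@fired Q) rhos).
  apply: (disjoint_blocks (z := fun c : config Q => c.2 == 0)).
    by rewrite all_map; apply: sub_all Harcs => p /arc_take1_fired.
  by rewrite -(fired_concat Hcat); apply: zcount_min_loops_avoid Hrho Hmin.
have Huniq : uniq (flatten (mkseq L m)).
  apply: uniq_flatten_subblocks Hblocks.
  rewrite -(take_size rhos) -(map_nth_iota0 d (leqnn m)) -map_comp /mkseq all2_map.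
  by apply/allP => i; rewrite mem_iota => /HLi /and3P[-> -> _].
have Hlow : all (@low_cfg Q) (flatten (mkseq L m)).
  by apply/allP => c /flattenP[l /mapP[i]]; rewrite mem_iota => /HLi /and3P[_ _ /allP H] -> /H.
suff -> : \sum_(i < m | inL i) len (nth d rhos i)
          + \sum_(i < m | ~~ inL i) (len (dpref (dec i)) + len (dsuff (dec i)))
          = size (flatten (mkseq L m)).
  by apply: leq_trans (size_uniq_bounded_cfgs Huniq Hlow) _; rewrite /n_states mulnCA mulnn.
rewrite size_flatten /shape /mkseq -map_comp sumnE big_map -[m]subn0 big_mkord subn0.
rewrite [RHS](bigID (fun i : 'I_m => inL i)) /=; congr (_ + _); apply: eq_bigr => i HiL.
- by rewrite /L HiL size_fired.
- by rewrite /L (negbTE HiL) size_cat !size_fired.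
Qed.
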